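(* Let $V$ be a proper (i.e. non-unitary) isometry on an infinite-dimensional separable Hilbert space and let $k\in\mathbb{N}$. Then $\overline{\Lambda_k(V)}=\overline{\mathbb{D}}$.
   Context: $\mathbb{D}=\{z\in\mathbb{C}:|z|<1\}$. For $T\in\mathcal{B}(\mathcal{L})$ and $k\in\mathbb{N}$, $\Lambda_k(T)=\{\lambda\in\mathbb{C}: PTP=\lambda P\text{ for some orthogonal projection } P \text{ of rank } k\}$. *)

From HB Require Import structures.
From mathcomp Require Import all_boot all_order all_algebra.
From mathcomp Require Import reals complex.
Set Implicit Arguments. Unset Strict Implicit. Unset Printing Implicit Defensive.
Import Order.TTheory GRing.Theory Num.Theory.
Local Open Scope ring_scope.
Local Open Scope complex_scope.

Section Hilbert.
Variables (R : realType) (H : lmodType R[i]) (ip : H -> H -> R[i]).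

Definition is_inner_product : Prop :=
  [/\ forall (a : R[i]) (x y z : H), ip (a *: x + y) z = a * ip x z + ip y z,
      forall x y : H, ip x y = (ip y x)^*,
      forall x : H, 0 <= ip x x
    & forall x : H, ip x x = 0 -> x = 0].

Definition hnorm (x : H) : R[i] := sqrtC (ip x x).

Definition cauchy_seq (u : nat -> H) : Prop :=
  forall e : R[i], 0 < e -> exists N : nat,
    forall m n : nat, (N <= m)%N -> (N <= n)%N -> hnorm (u m - u n) < e.

Definition converges_to (u : nat -> H) (l : H) : Prop :=
  forall e : R[i], 0 < e -> exists N : nat,
    forall n : nat, (N <= n)%N -> hnorm (u n - l) < e.

Definition complete_space : Prop :=
  forall u : nat -> H, cauchy_seq u -> exists l : H, converges_to u l.

Definition separable_space : Prop :=
  exists d : nat -> H, forall (x : H) (e : R[i]), 0 < e ->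
    exists n : nat, hnorm (x - d n) < e.

Definition lin_indep (n : nat) (v : 'I_n -> H) : Prop :=
  forall c : 'I_n -> R[i], \sum_(j < n) c j *: v j = 0 -> forall j, c j = 0.

Definition infinite_dimensional : Prop :=
  forall n : nat, exists v : 'I_n -> H, lin_indep v.

Definition inf_dim_separable_Hilbert : Prop :=
  [/\ is_inner_product, complete_space, separable_space & infinite_dimensional].

Definition is_linear_op (T : H -> H) : Prop :=
  forall (a : R[i]) (x y : H), T (a *: x + y) = a *: T x + T y.

Definition bounded_op (T : H -> H) : Prop :=
  is_linear_op T /\ exists M : R[i], forall x : H, hnorm (T x) <= M * hnorm x.

Definition isometry (V : H -> H) : Prop :=
  bounded_op V /\ forall x : H, hnorm (V x) = hnorm x.

Definition unitary (V : H -> H) : Prop :=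
  isometry V /\ forall y : H, exists x : H, V x = y.

Definition proper_isometry (V : H -> H) : Prop := isometry V /\ ~ unitary V.

Definition orth_projection (P : H -> H) : Prop :=
  [/\ is_linear_op P, forall x : H, P (P x) = P x
    & forall x y : H, ip (P x) y = ip x (P y)].

Definition has_rank (P : H -> H) (k : nat) : Prop :=
  exists v : 'I_k -> H,
    [/\ lin_indep v,
        forall j, exists x : H, P x = v j
      & forall x : H, exists c : 'I_k -> R[i], P x = \sum_(j < k) c j *: v j].

Definition higher_rank_num_range (k : nat) (T : H -> H) (lam : R[i]) : Prop :=
  exists P : H -> H, [/\ orth_projection P, has_rank P k
    & forall x : H, P (T (P x)) = lam *: P x].

End Hilbert.

Definition in_closure (R : realType) (S : R[i] -> Prop) (z : R[i]) : Prop :=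
  forall e : R[i], 0 < e -> exists w : R[i], S w /\ `|z - w| < e.

(* If lam = <V u, u> for a unit vector u in the range of the projection, then
   0 <= ||V u - lam u||^2 = 1 - |lam|^2; hence Lambda_k(V) lies in the closed unit disk.
   Conversely, pick y outside the range of V.  Minimizing sequences for x |-> ||y - V x||
   are Cauchy by the parallelogram law, so by completeness the distance from y to the
   range is attained, and the normalized error vector e is orthogonal to the range:
   V^n e is an orthonormal sequence on which V acts as the unilateral shift.
   For z = |z| om and K = N + 1, the vector
     x0 = a (e_0 + om^* e_1 + ... + om^*^N e_N) + b e_(N+2),
   with |a|^2 = |z| / K and |b|^2 = 1 - |z|, is a unit vector with
   <V x0, x0> = (N / K) z and <V^m x0, x0> = 0 for m >= K + 2.  The iterates
   V^(j (K+3)) x0, j < k, are then orthonormal and V compresses to the scalar (N / K) z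
   on their span, so (N / K) z lies in Lambda_k(V) and is within 1 / K of z. *)

From HB Require Import structures.
From mathcomp Require Import all_boot all_order all_algebra.
From mathcomp Require Import ring lra zify.
From mathcomp Require Import reals complex.
From Stdlib Require Import Classical.
Set Implicit Arguments. Unset Strict Implicit. Unset Printing Implicit Defensive.
Import Order.TTheory GRing.Theory Num.Theory.
Local Open Scope ring_scope.
Local Open Scope complex_scope.
Local Notation Re := complex.Re.
Local Notation Im := complex.Im.

Lemma inv_succ_lt (R : realType) (e : R) :
  0 < e -> exists N, forall n, (N <= n)%N -> n.+1%:R^-1 < e.
Proof.
move=> e0; have [N] := ltr_add_invr e0; rewrite add0r => hN.
exists N => n Nn; apply: le_lt_trans hN.
by rewrite lef_pV2 ?posrE ?ltr0Sn // ler_nat.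
Qed.

Lemma gt0_complexE (R : realType) (e : R[i]) : 0 < e -> exists2 r : R, 0 < r & e = r%:C.
Proof. by case: e => a b; rewrite ltcE /= => /andP[/eqP -> a0]; exists a. Qed.

Lemma polar_decomposition (R : realType) (z : R[i]) : exists2 om, `|om| = 1 & z = `|z| * om.
Proof.
have [->|z0] := eqVneq z 0; first by exists 1; rewrite ?normr1 ?normr0 ?mul0r.
exists (z / `|z|); first by rewrite normf_div normr_id divff // normr_eq0.
by rewrite mulrC divfK // normr_eq0.
Qed.

Lemma in_closure_norm_le1 (R : realType) (S : R[i] -> Prop) z :
  (forall w, S w -> `|w| <= 1) -> in_closure S z -> `|z| <= 1.
Proof.
move=> S_le1 z_cl; rewrite real_leNgt ?real1 ?normr_real //; apply/negP => z_gt1.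
have [w [/S_le1 w_le1 zw]] : exists w, S w /\ `|z - w| < `|z| - 1.
  by apply: z_cl; rewrite subr_gt0.
have := ler_normD w (z - w); rewrite addrC subrK => /le_lt_trans /(_ (ler_ltD w_le1 zw)).
by rewrite addrC subrK ltxx.
Qed.

Section InnerProduct.
Variables (R : realType) (H : lmodType R[i]) (ip : H -> H -> R[i]).
Hypothesis ipP : is_inner_product ip.

Lemma ipDl x y z : ip (x + y) z = ip x z + ip y z.
Proof. by case: ipP => linP _ _ _; have := linP 1 x y z; rewrite scale1r mul1r. Qed.

Lemma ip0l z : ip 0 z = 0.
Proof. by apply: (addrI (ip 0 z)); rewrite -ipDl !addr0. Qed.

Lemma ipZl a x z : ip (a *: x) z = a * ip x z.
Proof. by case: ipP => linP _ _ _; have := linP a x 0 z; rewrite addr0 ip0l addr0. Qed.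

Lemma ip_sym x y : ip x y = (ip y x)^*.
Proof. by case: ipP. Qed.

Lemma ipDr x y z : ip x (y + z) = ip x y + ip x z.
Proof. by rewrite [LHS]ip_sym ipDl rmorphD (ip_sym x y) (ip_sym x z). Qed.

Lemma ipZr a x z : ip x (a *: z) = a^* * ip x z.
Proof. by rewrite [LHS]ip_sym ipZl rmorphM (ip_sym x z). Qed.

Lemma ipiZr x z : ip x ('i *: z) = - 'i * ip x z.
Proof. by rewrite ipZr; congr (_ * _); apply/eqP; rewrite eq_complex /= oppr0 !eqxx. Qed.

Lemma ipNl x z : ip (- x) z = - ip x z.
Proof. by rewrite -scaleN1r ipZl mulN1r. Qed.

Lemma ipNr x z : ip x (- z) = - ip x z.
Proof. by rewrite -scaleN1r ipZr rmorphN1 mulN1r. Qed.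

Lemma ip0r z : ip z 0 = 0.
Proof. by rewrite ip_sym ip0l rmorph0. Qed.

Lemma ip_suml n (F : 'I_n -> H) z : ip (\sum_(j < n) F j) z = \sum_(j < n) ip (F j) z.
Proof. by elim/big_rec2: _ => [|j a x _ <-]; rewrite ?ip0l ?ipDl. Qed.

Lemma ip_sumr n (F : 'I_n -> H) z : ip z (\sum_(j < n) F j) = \sum_(j < n) ip z (F j).
Proof. by elim/big_rec2: _ => [|j a x _ <-]; rewrite ?ip0r ?ipDr. Qed.

Lemma ip_ge0 x : 0 <= ip x x.
Proof. by case: ipP. Qed.

Lemma ip_eq0 x : (ip x x == 0) = (x == 0).
Proof.
by apply/eqP/eqP => [|->]; [case: ipP => _ _ _; apply | rewrite ip0l].
Qed.

Lemma ip_normalize v : v != 0 -> exists c : R[i], ip (c *: v) (c *: v) = 1.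
Proof.
rewrite -ip_eq0 => v0; exists (sqrtC (ip v v))^-1.
rewrite ipZl ipZr mulrA -normCK normfV ger0_norm ?sqrtC_ge0 ?ip_ge0 //.
by rewrite exprVn sqrtCK mulVf.
Qed.

Definition sqnorm x : R := Re (ip x x).

Lemma ip_sqnorm x : ip x x = (sqnorm x)%:C.
Proof. by have := ip_ge0 x; rewrite lecE /sqnorm; case: (ip x x) => a b /= /andP[/eqP ->]. Qed.

Lemma sqnorm_ge0 x : 0 <= sqnorm x.
Proof. by rewrite -lecR -ip_sqnorm ip_ge0. Qed.

Lemma sqnormD u v : sqnorm (u + v) = sqnorm u + sqnorm v + 2 * Re (ip u v).
Proof.
rewrite /sqnorm ipDl !ipDr (ip_sym v u) !raddfD /=.
have -> : Re (ip u v)^* = Re (ip u v) by case: (ip u v).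
by rewrite mulr2n; ring.
Qed.

Lemma sqnormZ a u : sqnorm (a *: u) = (Re a ^+ 2 + Im a ^+ 2) * sqnorm u.
Proof.
by rewrite /sqnorm ipZl ipZr mulrA -sqr_normc -add_Re2_Im2 ip_sqnorm -rmorphM.
Qed.

Lemma sqnormN u : sqnorm (- u) = sqnorm u.
Proof. by rewrite /sqnorm ipNl ipNr opprK. Qed.

Lemma sqnormB u v : sqnorm (u - v) = sqnorm u + sqnorm v - 2 * Re (ip u v).
Proof. by rewrite sqnormD sqnormN ipNr raddfN /= mulrN. Qed.

Lemma parallelogram u v : sqnorm (u - v) + sqnorm (u + v) = 2 * sqnorm u + 2 * sqnorm v.
Proof. by rewrite sqnormB sqnormD; ring. Qed.

Lemma sqnorm_apollonius y u v :
  sqnorm (u - v) = 2 * sqnorm (y - u) + 2 * sqnorm (y - v) - 4 * sqnorm (y - 2^-1 *: (u + v)).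
Proof.
have mid : (y - u) + (y - v) = 2 *: (y - 2^-1 *: (u + v)).
  by rewrite scalerBr scalerA mulfV ?pnatr_eq0 // scale1r opprD addrACA scaler_nat mulr2n.
have sqnorm2 w : sqnorm (2 *: w) = 4 * sqnorm w.
  by rewrite sqnormZ /=; congr (_ * _); ring.
have := parallelogram (y - u) (y - v).
rewrite mid sqnorm2 -sqnormN opprB opprD opprK addrACA subrr add0r addrC; lra.
Qed.

Lemma sqnormD_le t u v : 0 < t ->
  sqnorm (u + v) <= (1 + t) * sqnorm u + (1 + t^-1) * sqnorm v.
Proof.
move=> t0; rewrite sqnormD -subr_ge0.
have reZ : Re (t%:C * ip u v) = t * Re (ip u v) by case: (ip u v) => a b /=; ring.
have := sqnorm_ge0 (t%:C *: u - v); rewrite sqnormB sqnormZ ipZl reZ /= expr0n addr0.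
set a := sqnorm u; set b := sqnorm v; set c := Re (ip u v) => h.
have -> : (1 + t) * a + (1 + t^-1) * b - (a + b + 2 * c) =
          t^-1 * (t ^+ 2 * a + b - 2 * (t * c)) by field; rewrite gt_eqF.
by rewrite mulr_ge0 // invr_ge0 ltW.
Qed.

Lemma sqnorm_le_of_approx u (b : R) :
  (forall d, 0 < d -> exists v, sqnorm v <= b + d /\ sqnorm (u - v) <= d) ->
  sqnorm u <= b.
Proof.
move=> approx.
have b0 : 0 <= b.
  by apply/ler_addgt0Pr => e /approx [v [vb _]]; exact: le_trans (sqnorm_ge0 v) vb.
have le_scaled t : 0 < t -> sqnorm u <= (1 + t) * b.
  move=> t0; pose c := (1 + t) + (1 + t^-1).
  have ti0 : 0 < t^-1 by rewrite invr_gt0.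
  have c0 : 0 < c by rewrite /c; lra.
  apply/ler_addgt0Pr => e e0.
  have [v [vb uv]] := approx (e / c) (divr_gt0 e0 c0).
  have ec : e / c * c = e by rewrite mulfVK ?gt_eqF.
  have := sqnormD_le v (u - v) t0; rewrite addrC subrK /c in ec *; nra.
apply/ler_addgt0Pr => e e0.
have t0 : 0 < e / (b + 1) by rewrite divr_gt0 //; lra.
have tb : e / (b + 1) * (b + 1) = e by rewrite mulfVK //; lra.
have := le_scaled _ t0; nra.
Qed.

Lemma hnorm_ltE u (e : R) : 0 < e -> (hnorm ip u < e%:C) = (sqnorm u < e ^+ 2).
Proof.
move=> e0; rewrite /hnorm ip_sqnorm -[e%:C]sqrCK ?ler0c ?ltW //.
rewrite ltr_sqrtC ?qualifE /= ?ler0c ?sqnorm_ge0 ?exprn_ge0 ?ltW ?ltcR //.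
by rewrite -(rmorphXn (real_complex R)) ltcR.
Qed.

Lemma cauchy_seq_sqnorm (s : nat -> H) :
  (forall e : R, 0 < e ->
     exists N, forall m n, (N <= m)%N -> (N <= n)%N -> sqnorm (s m - s n) < e) ->
  cauchy_seq ip s.
Proof.
move=> s_cauchy _ /gt0_complexE[e e0 ->].
have [N hN] := s_cauchy _ (exprn_gt0 2 e0).
by exists N => m n Nm Nn; rewrite hnorm_ltE // hN.
Qed.

Lemma converges_to_sqnorm (s : nat -> H) l : converges_to ip s l ->
  forall e : R, 0 < e -> exists N, forall n, (N <= n)%N -> sqnorm (s n - l) < e.
Proof.
move=> s_cv e e0; have sqrt_e0 : 0 < Num.sqrt e by rewrite sqrtr_gt0.
have [N hN] : exists N, forall n, (N <= n)%N -> hnorm ip (s n - l) < (Num.sqrt e)%:C.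
  by apply: s_cv; rewrite ltcR.
by exists N => n /hN; rewrite hnorm_ltE // sqr_sqrtr // ltW.
Qed.

Lemma ip_lincomb2 a b c d u1 u2 v1 v2 :
  ip (a *: u1 + b *: u2) (c *: v1 + d *: v2) =
  a * c^* * ip u1 v1 + a * d^* * ip u1 v2 + b * c^* * ip u2 v1 + b * d^* * ip u2 v2.
Proof. by rewrite !ipDl !ipDr !ipZl !ipZr; ring. Qed.

End InnerProduct.

Section OrthonormalFamily.
Variables (R : realType) (H : lmodType R[i]) (ip : H -> H -> R[i]).
Hypothesis ipP : is_inner_product ip.
Variables (k : nat) (u : 'I_k -> H).

Definition orthonormal := forall i j, ip (u i) (u j) = (i == j)%:R.

Hypothesis u_orthonormal : orthonormal.

Lemma ip_sum_orthonormal (c : 'I_k -> R[i]) l : ip (\sum_(j < k) c j *: u j) (u l) = c l.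
Proof.
rewrite (ip_suml ipP) (eq_bigr (fun j => if j == l then c j else 0)).
  by rewrite -big_mkcond big_pred1_eq.
by move=> j _; rewrite (ipZl ipP) u_orthonormal mulr_natr mulrb.
Qed.

Lemma orthonormal_lin_indep : lin_indep u.
Proof. by move=> c c0 l; rewrite -(ip_sum_orthonormal c) c0 (ip0l ipP). Qed.

Definition oproj y := \sum_(j < k) ip y (u j) *: u j.

Lemma ip_oproj y l : ip (oproj y) (u l) = ip y (u l).
Proof. exact: ip_sum_orthonormal. Qed.

Lemma oproj_linear : is_linear_op oproj.
Proof.
move=> a x y; rewrite /oproj scaler_sumr -big_split; apply: eq_bigr => j _.
by rewrite (ipDl ipP) (ipZl ipP) scalerDl scalerA.
Qed.

Lemma orth_projection_oproj : orth_projection ip oproj.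
Proof.
split; first exact: oproj_linear.
  by move=> y; apply: eq_bigr => j _; rewrite ip_oproj.
move=> x y; rewrite (ip_suml ipP) (ip_sumr ipP); apply: eq_bigr => j _.
by rewrite (ipZl ipP) (ipZr ipP) (ip_sym ipP (u j) y) mulrC.
Qed.

Lemma has_rank_oproj : has_rank oproj k.
Proof.
exists u; split; first exact: orthonormal_lin_indep.
  move=> l; exists (u l); rewrite /oproj (eq_bigr (fun j => if j == l then u j else 0)).
    by rewrite -big_mkcond big_pred1_eq.
  by move=> j _; rewrite u_orthonormal scaler_nat mulrb eq_sym.
by move=> x; exists (fun j => ip x (u j)).
Qed.

End OrthonormalFamily.

Section LinearOperator.
Variables (R : realType) (H : lmodType R[i]) (ip : H -> H -> R[i]).
Hypothesis ipP : is_inner_product ip.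
Variable V : H -> H.
Hypothesis V_lin : is_linear_op V.

Fact V_linear : linear V. Proof. by move=> a x y; apply: V_lin. Qed.
HB.instance Definition _ := GRing.isLinear.Build R[i] H H *:%R V V_linear.

Fact iter_V_linear n : linear (iter n V).
Proof. by move=> a x y; elim: n => //= n ->; rewrite linearD linearZ. Qed.
HB.instance Definition _ n := GRing.isLinear.Build R[i] H H *:%R (iter n V) (iter_V_linear n).

Local Notation sqnorm := (sqnorm ip).

Lemma num_range_of_orthonormal k (u : 'I_k -> H) lam :
  orthonormal ip u -> (forall i j, ip (V (u i)) (u j) = lam * (i == j)%:R) ->
  higher_rank_num_range ip k V lam.
Proof.
move=> u_on Vu; exists (oproj ip u).
split; [exact: orth_projection_oproj | exact: has_rank_oproj |] => x.
rewrite [in LHS]/oproj [in RHS]/oproj scaler_sumr; apply: eq_bigr => l _.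
rewrite scalerA; congr (_ *: _); rewrite /oproj linear_sum (ip_suml ipP).
rewrite (eq_bigr (fun j => if j == l then lam * ip x (u j) else 0)).
  by rewrite -big_mkcond big_pred1_eq.
by move=> j _; rewrite linearZ (ipZl ipP) Vu; case: (j == l); rewrite ?mulr1 ?mulr0 // mulrC.
Qed.

Lemma min_dist_orthogonal y x :
  (forall x', sqnorm (y - V x) <= sqnorm (y - V x')) -> forall w, ip (y - V x) (V w) = 0.
Proof.
move=> xmin w; set u := y - V x; set c := ip u (V w); set q := sqnorm (V w).
pose m := Re c ^+ 2 + Im c ^+ 2; pose t := (q + 1)^-1.
have q0 : 0 <= q := sqnorm_ge0 ipP _.
have t0 : 0 < t by rewrite invr_gt0; lra.
have tq : t * q < 1 by rewrite mulrC ltr_pdivrMr; lra.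
have shift : y - V (x + (t%:C * c) *: w) = u - (t%:C * c) *: V w.
  by rewrite linearD linearZ opprD addrA.
(* Moving x by t c w changes the squared distance by t |c|^2 (t q - 2) < 0 unless c = 0. *)
have := xmin (x + (t%:C * c) *: w).
rewrite shift (sqnormB ipP u) (sqnormZ ipP) (ipZr ipP) -/c -/q.
have -> : Re (t%:C * c) ^+ 2 + Im (t%:C * c) ^+ 2 = t ^+ 2 * m.
  by rewrite /m; case: (c) => a b /=; ring.
have -> : Re ((t%:C * c)^* * c) = t * m by rewrite /m; case: (c) => a b /=; ring.
have m0 : 0 <= m by rewrite /m addr_ge0 ?sqr_ge0.
move=> h; have : m * (t * (2 - t * q)) <= 0 by nra.
rewrite pmulr_lle0 => [m_le0|]; last by rewrite mulr_gt0 // subr_gt0; lra.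
have m_eq0 : m = 0 by apply/eqP; rewrite eq_le m_le0 m0.
have /eqP : `|c| ^+ 2 = 0 by rewrite -add_Re2_Im2 -/m m_eq0.
by rewrite expf_eq0 /= normr_eq0 => /eqP.
Qed.

Section Isometry.
Hypothesis V_norm : forall x, hnorm ip (V x) = hnorm ip x.

Lemma ip_isometry x y : ip (V x) (V y) = ip x y.
Proof.
have ipVV z : ip (V z) (V z) = ip z z.
  by have := congr1 (fun t => t ^+ 2) (V_norm z); rewrite /hnorm !sqrtCK.
have h1 := ipVV (x + y); have h2 := ipVV (x + 'i *: y).
rewrite linearD /= !(ipDl ipP) !(ipDr ipP) !ipVV in h1.
rewrite linearD linearZ /= !(ipDl ipP) !(ipDr ipP) !(ipZl ipP) !(ipiZr ipP) !ipVV in h2.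
move: h1 h2.
move: (ip (V x) (V y)) (ip (V y) (V x)) (ip x y) (ip y x) (ip x x) (ip y y) => A B a b X Y h1 h2.
(* Polarization: h1 gives A + B = a + b and h2 gives A - B = a - b. *)
have : 2 * (A - a) = (X + A + (B + Y) - (X + a + (b + Y))) +
   'i * ((X + -'i * A + ('i * B + 'i * (-'i * Y))) - (X + -'i * a + ('i * b + 'i * (-'i * Y))))
   + (1 + 'i ^+ 2) * (A - B - a + b) by ring.
rewrite h1 h2 !subrr mulr0 addr0 sqr_i subrr mul0r addr0 => /eqP.
by rewrite mulf_eq0 pnatr_eq0 /= subr_eq0 => /eqP.
Qed.

Lemma sqnorm_isometry x : sqnorm (V x) = sqnorm x.
Proof. by rewrite /sqnorm ip_isometry. Qed.

Lemma sqnorm_sub_le_excess y d x1 x2 : (forall x, d <= sqnorm (y - V x)) ->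
  sqnorm (x1 - x2) <= 2 * (sqnorm (y - V x1) - d) + 2 * (sqnorm (y - V x2) - d).
Proof.
move=> d_le; pose c := 2^-1 *: (x1 + x2).
have mid : y - 2^-1 *: (V x1 + V x2) = y - V c by rewrite [in RHS]linearZ /= [in RHS]linearD.
rewrite -sqnorm_isometry linearB /= (sqnorm_apollonius ipP y (V x1) (V x2)) mid.
by have := d_le c; lra.
Qed.

Lemma dist_attained : complete_space ip ->
  forall y, exists x, forall x', sqnorm (y - V x) <= sqnorm (y - V x').
Proof.
move=> complete y; pose D x := sqnorm (y - V x).
pose S r := exists x, r = D x.
have S_inf : classical_sets.has_inf S.
  by split; [exists (D 0), 0 | exists 0 => _ [x ->]; apply: sqnorm_ge0].
pose d := inf S.
have d_le x : d <= D x by apply: (ge_inf S_inf.2); exists x.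
have near n : exists x, D x < d + n.+1%:R^-1.
  have n_pos : 0 < n.+1%:R^-1 :> R by rewrite invr_gt0 ltr0Sn.
  by have [_ [x ->]] := inf_adherent n_pos S_inf; exists x.
pose s n := xchoose (near n).
have s_near n : D (s n) < d + n.+1%:R^-1 := xchooseP (near n).
have s_close m n : sqnorm (s m - s n) <= 2 * m.+1%:R^-1 + 2 * n.+1%:R^-1.
  have := sqnorm_sub_le_excess (s m) (s n) d_le; have := s_near m; have := s_near n.
  by rewrite /D; move: (m.+1%:R^-1) (n.+1%:R^-1) => a b; lra.
have [x s_cv] : exists x, converges_to ip s x.
  apply: complete; apply: (cauchy_seq_sqnorm ipP) => e e0.
  have [N hN] := inv_succ_lt (divr_gt0 e0 (ltr0n R 4)).
  exists N => m n /hN m_small /hN n_small.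
  apply: le_lt_trans (s_close m n) _.
  by move: m_small n_small; move: (m.+1%:R^-1) (n.+1%:R^-1) => a b; lra.
exists x => x'; apply: le_trans (d_le x'); apply: (sqnorm_le_of_approx ipP) => e e0.
have [N1 hN1] := inv_succ_lt e0.
have [N2 hN2] := converges_to_sqnorm ipP s_cv e0.
pose n := maxn N1 N2; exists (y - V (s n)); split.
  by apply: ltW; apply: lt_le_trans (s_near n) _; rewrite lerD2l ltW // hN1 // leq_maxl.
have -> : y - V x - (y - V (s n)) = V (s n - x).
  by rewrite [RHS]linearB /= opprB addrC addrA subrK.
rewrite sqnorm_isometry.
by apply: ltW; rewrite hN2 // leq_maxr.
Qed.

Lemma wandering_unit : complete_space ip -> forall y, (forall x, V x <> y) ->
  exists e, ip e e = 1 /\ forall w, ip (V w) e = 0.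
Proof.
move=> complete y y_notin; have [x xmin] := dist_attained complete y.
have u0 : y - V x != 0 by rewrite subr_eq0; apply/eqP => /esym /y_notin.
have [c unit_u] := ip_normalize ipP u0.
exists (c *: (y - V x)); split => // w.
by rewrite (ipZr ipP) (ip_sym ipP) (min_dist_orthogonal xmin) conjc0 mulr0.
Qed.

Lemma ip_iter p q x z : (q <= p)%N -> ip (iter p V x) (iter q V z) = ip (iter (p - q) V x) z.
Proof.
elim: q p => [|q IH] [|p] //= qp.
by rewrite ip_isometry IH // subSS.
Qed.

Lemma num_range_of_decaying x0 L k :
  ip x0 x0 = 1 -> (forall m, (L <= m)%N -> ip (iter m V x0) x0 = 0) ->
  higher_rank_num_range ip k V (ip (V x0) x0).
Proof.
move=> x0_unit far.
have far_sym p q : (q + L <= p)%N -> ip (iter q V x0) (iter p V x0) = 0.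
  by move=> qp; rewrite (ip_sym ipP) ip_iter ?far ?conjc0 //; lia.
have stride_orthonormal i j : ip (iter (i * L.+1) V x0) (iter (j * L.+1) V x0) = (i == j)%:R.
  have [ij|ji|->] := ltngtP i j.
  - by rewrite far_sym //; nia.
  - by rewrite ip_iter ?far //; nia.
  - by rewrite ip_iter // subnn.
have stride_V i j :
    ip (iter (i * L.+1).+1 V x0) (iter (j * L.+1) V x0) = ip (V x0) x0 * (i == j)%:R.
  have [ij|ji|->] := ltngtP i j.
  - by rewrite far_sym ?mulr0 //; nia.
  - by rewrite ip_iter ?far ?mulr0 //; nia.
  - by rewrite ip_iter // subSn // subnn mulr1.
by apply: (num_range_of_orthonormal (u := fun j : 'I_k => iter (j * L.+1) V x0)) => i j;
  [apply: stride_orthonormal | apply: stride_V].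
Qed.

Lemma norm_ip_unit_le1 u : ip u u = 1 -> `|ip (V u) u| <= 1.
Proof.
move=> u_unit; set l := ip (V u) u.
have := ip_ge0 ipP (V u - l *: u).
rewrite !(ipDl ipP) !(ipDr ipP) !(ipNl ipP) !(ipNr ipP) !(ipZl ipP) !(ipZr ipP).
rewrite ip_isometry u_unit -/l (ip_sym ipP u (V u)) -/l mulr1 -sqr_normc subrr addr0.
by rewrite mulrC -sqr_normc subr_ge0 expr_le1 ?normr_ge0.
Qed.

Lemma num_range_norm_le1 k lam : (0 < k)%N -> higher_rank_num_range ip k V lam -> `|lam| <= 1.
Proof.
move=> k0 [P [[P_lin P_idem P_sym] [v [v_indep v_range _]] P_comp]].
pose j0 : 'I_k := Ordinal k0.
have v0 : v j0 != 0.
  apply/eqP => v0; suff : (j0 == j0)%:R = 0 :> R[i] by rewrite eqxx => /eqP; rewrite oner_eq0.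
  apply: (v_indep (fun j => (j == j0)%:R)); rewrite (bigD1 j0) //= scale1r v0 add0r.
  by rewrite big1 // => j /negbTE ->; rewrite scale0r.
have [c u_unit] := ip_normalize ipP v0; set u := c *: v j0 in u_unit.
have P0 : P 0 = 0.
  by apply: (addIr (P 0)); rewrite add0r -{1}(scale1r (P 0)) -P_lin scale1r addr0.
have Pu : P u = u.
  rewrite /u; have [x <-] := v_range j0.
  by rewrite -[c *: P x]addr0 P_lin P0 P_idem.
have: ip (P (V (P u))) u = lam by rewrite P_comp Pu (ipZl ipP) u_unit mulr1.
by rewrite P_sym Pu => <-; apply: norm_ip_unit_le1.
Qed.

Section WanderingVector.
Variable e : H.
Hypotheses (e_unit : ip e e = 1) (e_wandering : forall w, ip (V w) e = 0).

Definition orbit n := iter n V e.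

Lemma ip_orbit m n : ip (orbit m) (orbit n) = (m == n)%:R.
Proof.
have gap p q : (q < p)%N -> ip (orbit p) (orbit q) = 0.
  by move=> qp; rewrite /orbit ip_iter ?(ltnW qp) // -(subnSK qp) iterS e_wandering.
have [mn|nm|->] := ltngtP m n; last by rewrite /orbit ip_iter // subnn.
  by rewrite (ip_sym ipP) gap ?conjc0.
by rewrite gap.
Qed.

Section Blocks.
Variable w : R[i].
Hypothesis w_unimodular : `|w| = 1.

Definition block s K := \sum_(i < K) w ^+ i *: orbit (s + i).

Lemma iter_block m s K : iter m V (block s K) = block (m + s) K.
Proof.
rewrite linear_sum; apply: eq_bigr => i _.
by rewrite linearZ /= /orbit -iterD addnA.
Qed.

Lemma ip_block_orbit s K j :
  ip (block s K) (orbit j) = if (s <= j < s + K)%N then w ^+ (j - s) else 0.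
Proof.
elim: K => [|K IH]; first by rewrite /block big_ord0 (ip0l ipP) addn0 ltnNge andbN.
rewrite /block big_ord_recr /= (ipDl ipP) -/(block s K) IH (ipZl ipP) ip_orbit addnS ltnS.
have [lt|gt|<-] := ltngtP (s + K) j.
- by rewrite !andbF /= mulr0 addr0.
- by rewrite !andbT /= mulr0 addr0.
- by rewrite leq_addr /= mulr1 add0r addKn.
Qed.

Lemma ip_block_disjoint s K t L :
  (t + L <= s)%N || (s + K <= t)%N -> ip (block s K) (block t L) = 0.
Proof.
move=> disj; rewrite /block (ip_sumr ipP) -/(block s K); apply: big1 => i _.
rewrite (ipZr ipP) ip_block_orbit ifF ?mulr0 //.
by apply/negbTE; move: (ltn_ord i) disj; lia.
Qed.

Lemma ip_block_self s K : ip (block s K) (block s K) = K%:R.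
Proof.
rewrite {2}/block (ip_sumr ipP) (eq_bigr (fun _ => 1)) ?sumr_const ?card_ord // => i _.
rewrite (ipZr ipP) ip_block_orbit leq_addr ltn_add2l ltn_ord /= addKn.
by rewrite mulrC -sqr_normc normrX w_unimodular !expr1n.
Qed.

Lemma ip_block_shift K : ip (block 1 K.+1) (block 0 K.+1) = K%:R * w^*.
Proof.
have ww : w^* * w = 1 by rewrite mulrC -sqr_normc w_unimodular expr1n.
rewrite {2}/block (ip_sumr ipP) big_ord_recl (ipZr ipP) ip_block_orbit.
rewrite [X in X + _]/= mulr0 add0r.
rewrite (eq_bigr (fun _ => w^*)) ?sumr_const ?card_ord ?mulr_natl // => i _.
rewrite (ipZr ipP) ip_block_orbit ifT lift0 ?add0n ?subn1 /=; last by move: (ltn_ord i); lia.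
by rewrite rmorphXn exprSr mulrAC -exprMn ww expr1n mul1r.
Qed.

(* The empty slot at index K keeps the b-term out of <V probe, probe>; it only tops up
   the norm. *)
Definition probe K a b := a *: block 0 K + b *: block K.+1 1.

Lemma ip_probe K a b : ip (probe K a b) (probe K a b) = `|a| ^+ 2 * K%:R + `|b| ^+ 2.
Proof.
rewrite (ip_lincomb2 ipP) !ip_block_self !ip_block_disjoint ?mulr0 ?addr0 ?mulr1 ?sqr_normc //; lia.
Qed.

Lemma iter_probe m K a b : iter m V (probe K a b) = a *: block m K + b *: block (m + K.+1) 1.
Proof. by rewrite linearD !linearZ /= !iter_block addn0. Qed.

Lemma ip_iter_probe_far m K a b : (K.+2 <= m)%N -> ip (iter m V (probe K a b)) (probe K a b) = 0.
Proof.
move=> far; rewrite iter_probe (ip_lincomb2 ipP) !ip_block_disjoint ?mulr0 ?addr0 //; lia.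
Qed.

Lemma ip_V_probe K a b :
  ip (V (probe K a b)) (probe K a b) = `|a| ^+ 2 * ip (block 1 K) (block 0 K).
Proof.
rewrite -[V _]/(iter 1 V _) iter_probe (ip_lincomb2 ipP).
rewrite (@ip_block_disjoint 1 K K.+1 1) ?(@ip_block_disjoint (1 + K.+1) 1 0 K)
  ?(@ip_block_disjoint (1 + K.+1) 1 K.+1 1) ?mulr0 ?addr0 ?sqr_normc //; lia.
Qed.

End Blocks.

Lemma disk_sub_closure_num_range k z :
  `|z| <= 1 -> in_closure (higher_rank_num_range ip k V) z.
Proof.
move=> z_le1 _ /gt0_complexE[eps eps0 ->].
have [om om1 z_polar] := polar_decomposition z.
have [N /(_ N (leqnn N)) N_small] := inv_succ_lt eps0.
pose K := N.+1; have K0 : (K%:R : R[i]) != 0 by rewrite pnatr_eq0.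
have w1 : `|om^*| = 1 by rewrite norm_conjC.
pose a := sqrtC (`|z| / K%:R); pose b := sqrtC (1 - `|z|).
have aa : `|a| ^+ 2 = `|z| / K%:R by rewrite ger0_norm ?sqrtC_ge0 ?sqrtCK // divr_ge0 ?ler0n.
have bb : `|b| ^+ 2 = 1 - `|z| by rewrite ger0_norm ?sqrtC_ge0 ?sqrtCK // subr_ge0.
pose x0 := probe om^* K a b.
have x0_unit : ip x0 x0 = 1 by rewrite ip_probe // aa bb; field.
have lamE : ip (V x0) x0 = `|z| / K%:R * N%:R * om.
  by rewrite ip_V_probe ip_block_shift // aa mulrA; congr (_ * _); exact: conjcK.
exists (ip (V x0) x0); split.
  by apply: (@num_range_of_decaying x0 K.+2 k x0_unit) => m; apply: ip_iter_probe_far.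
have -> : z - ip (V x0) x0 = `|z| / K%:R * om.
  by rewrite lamE {1}z_polar /K -addn1 natrD; field; rewrite natr1 pnatr_eq0.
rewrite normrM om1 mulr1 ger0_norm ?divr_ge0 ?ler0n //.
apply: le_lt_trans (_ : 1 / K%:R < eps%:C).
  by rewrite ler_pM2r ?invr_gt0 ?ltr0n.
by rewrite div1r -(rmorph_nat (real_complex R)) -rmorphV ?unitfE ?pnatr_eq0 // ltcR.
Qed.

End WanderingVector.

End Isometry.
End LinearOperator.

Theorem corollary2p7 (R : realType) (H : lmodType R[i]) (ip : H -> H -> R[i])
  (V : H -> H) (k : nat) :
  inf_dim_separable_Hilbert ip -> proper_isometry ip V -> (0 < k)%N ->
  forall z : R[i], in_closure (higher_rank_num_range ip k V) z <-> `|z| <= 1.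
Proof.
move=> [ipP complete _ _] [V_iso not_unitary] k0 z.
have [[V_lin _] V_norm] := V_iso.
split=> [z_cl|z_le1].
  exact: in_closure_norm_le1 (fun w => num_range_norm_le1 ipP V_lin V_norm k0) z_cl.
have [y y_notin] : exists y, forall x, V x <> y.
  apply: NNPP => surj; apply: not_unitary; split=> // y.
  by apply: NNPP => /not_ex_all_not y_notin; apply: surj; exists y.
have [e [e_unit e_wandering]] := wandering_unit ipP V_lin V_norm complete y_notin.
exact: (disk_sub_closure_num_range ipP V_lin V_norm e_unit e_wandering k (z := z) z_le1).
Qed.
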